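(* Let $n\ge1$, $L,G>0$ and $\eta>0$ with $\eta nL\le \frac12$. Let $a_1,\dots,a_n\in[0,L]$ and $b_1,\dots,b_n\in[-G,G]$ with $\sum_{i=1}^nb_i=0$. For a permutation $\sigma$ of $\{1,\dots,n\}$ define \[ X_\sigma=\sum_{j=1}^n\left(\prod_{i=j+1}^n(1-\eta a_{\sigma(i)})\right)b_{\sigma(j)} \] (an empty product equals $1$). If $\sigma$ is a uniformly random permutation, then \[ \big|\mathbb{E}_\sigma[X_\sigma]\big|\;\le\;2\eta nGL. \] *)

From HB Require Import structures.
From mathcomp Require Import all_boot all_order all_algebra all_fingroup.
Set Implicit Arguments. Unset Strict Implicit. Unset Printing Implicit Defensive.
Import Order.TTheory GRing.Theory Num.Theory.
Local Open Scope ring_scope.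

(* Indices are 0-based: {1..n} is 'I_n.  For j : 'I_n the product over
   i = j+1..n becomes the product over i : 'I_n with j < i. *)
Definition Xsigma (R : realFieldType) (n : nat) (eta : R) (a b : 'I_n -> R)
    (s : {perm 'I_n}) : R :=
  \sum_(j < n) (\prod_(i < n | (j < i)%N) (1 - eta * a (s i))) * b (s j).

Definition Eperm (R : realFieldType) (n : nat) (F : {perm 'I_n} -> R) : R :=
  (\sum_(s : {perm 'I_n}) F s) / #|{perm 'I_n}|%:R.

From HB Require Import structures.
From mathcomp Require Import all_boot all_order all_algebra all_fingroup.
From mathcomp Require Import ring lra.
Set Implicit Arguments. Unset Strict Implicit. Unset Printing Implicit Defensive.
Import Order.TTheory GRing.Theory Num.Theory.
Local Open Scope ring_scope.

(* Write c u = 1 - eta * a u, so that c u lies in [0, 1] and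
   any two factors differ by at most eta * L.  Summing X_sigma over all
   permutations and regrouping by the item v = sigma(j) gives
     sum_sigma X_sigma = sum_v b_v * W v,
   where the tail weight W v is the sum over sigma of the product of c over
   the items placed after v.  Since sum_v b_v = 0 we may subtract W v0 from
   every W v.  Composing sigma with the transposition (v v0) shows that
   W v - W v0 is a sum of differences of two products of factors in [0, 1]
   whose factor lists differ in at most two places; a telescoping bound
   then gives |W v - W v0| <= n! * 2 eta L.  Hence
     |E X| <= (1/n!) * n * G * n! * 2 eta L = 2 eta n G L. *)

Lemma prod_diff (R : realFieldType) (I : finType) (P : pred I) (x y : I -> R) :
  (forall i, 0 <= x i <= 1) -> (forall i, 0 <= y i <= 1) ->
  `|\prod_(i | P i) x i - \prod_(i | P i) y i| <= \sum_(i | P i) `|x i - y i|.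
Proof.
move=> hx hy.
suff: [/\ 0 <= \prod_(i | P i) x i <= 1, 0 <= \prod_(i | P i) y i <= 1 &
   `|\prod_(i | P i) x i - \prod_(i | P i) y i| <= \sum_(i | P i) `|x i - y i|].
  by case.
apply: (big_rec3 (fun p q s => [/\ 0 <= p <= 1, 0 <= q <= 1 & `|p - q| <= s])).
  by rewrite subrr normr0 ler01 lexx.
move=> i p q s _ [/andP[p0 p1] /andP[q0 q1] hs].
have /andP[x0 x1] := hx i; have /andP[y0 y1] := hy i.
split; [by rewrite mulr_ge0 // mulr_ile1 | by rewrite mulr_ge0 // mulr_ile1 |].
have -> : x i * p - y i * q = x i * (p - q) + (x i - y i) * q by ring.
apply: (le_trans (ler_normD _ _)).
rewrite addrC normrM normrM (ger0_norm x0) (ger0_norm q0).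
apply: lerD; first by rewrite -[X in _ <= X]mulr1 ler_wpM2l.
by apply: (le_trans _ hs); rewrite -[X in _ <= X]mul1r ler_wpM2r.
Qed.

Section TailWeight.

Variables (R : realFieldType) (n : nat) (c : 'I_n -> R).

Definition tail_weight (v : 'I_n) : R :=
  \sum_(s : {perm 'I_n}) \prod_(i < n | (s^-1%g v < i)%N) c (s i).

Lemma sum_tail_products (b : 'I_n -> R) :
  \sum_(s : {perm 'I_n})
     \sum_(j < n) (\prod_(i < n | (j < i)%N) c (s i)) * b (s j) =
  \sum_v b v * tail_weight v.
Proof.
under [RHS]eq_bigr do rewrite mulr_sumr.
rewrite [RHS]exchange_big /=; apply: eq_bigr => s _.
rewrite (reindex_inj (@perm_inj _ s^-1%g)) /=.
by apply: eq_bigr => v _; rewrite permKV mulrC.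
Qed.

(* Relabelling the orderings by the transposition (v w) expresses the tail
   weight of w through the tail positions of v. *)
Lemma tail_weight_tperm (v w : 'I_n) :
  tail_weight w =
  \sum_(s : {perm 'I_n}) \prod_(i < n | (s^-1%g v < i)%N) c (tperm v w (s i)).
Proof.
rewrite /tail_weight (reindex_inj (@mulIg _ (tperm v w))) /=.
apply: eq_bigr => s _.
rewrite invgM tpermV permM tpermR; apply: eq_bigr => i _.
by rewrite permM.
Qed.

Variable d : R.
Hypothesis c_unit : forall u, 0 <= c u <= 1.
Hypothesis c_close : forall u w, `|c u - c w| <= d.

Lemma tperm_displacement (v w : 'I_n) :
  \sum_u `|c u - c (tperm v w u)| <= 2 * d.
Proof.
have d0 : 0 <= d by apply: le_trans (c_close v v); rewrite normr_ge0.
have indicator (x : 'I_n) : \sum_u (u == x)%:R = 1 :> R.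
  by rewrite (bigD1 x) //= eqxx big1 ?addr0 // => u /negPf ->.
apply: (@le_trans _ _ (\sum_u d * ((u == v)%:R + (u == w)%:R))).
  apply: ler_sum => u _.
  have [->|uv] := eqVneq u v.
    by apply: (le_trans (c_close _ _)); rewrite ler_peMr //= lerDl ler0n.
  have [->|uw] := eqVneq u w.
    by apply: (le_trans (c_close _ _)); rewrite ler_peMr //= lerDr ler0n.
  by rewrite tpermD 1?eq_sym // subrr normr0 mulr_ge0 // addr_ge0.
by rewrite -mulr_sumr big_split /= !indicator; lra.
Qed.

Lemma tail_weight_close (v w : 'I_n) :
  `|tail_weight v - tail_weight w| <= #|{perm 'I_n}|%:R * (2 * d).
Proof.
rewrite (tail_weight_tperm v w) /tail_weight -sumrB.
apply: (le_trans (ler_norm_sum _ _ _)).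
rewrite mulr_natl -sumr_const; apply: ler_sum => s _.
apply: (le_trans (prod_diff _ (fun i => c_unit (s i))
                               (fun i => c_unit (tperm v w (s i))))).
apply: (@le_trans _ _ (\sum_(i < n) `|c (s i) - c (tperm v w (s i))|)).
  rewrite [X in _ <= X](bigID (fun i : 'I_n => (s^-1%g v < i)%N)) /= lerDl.
  by apply: sumr_ge0 => i _; rewrite normr_ge0.
rewrite (reindex_inj (@perm_inj _ s^-1%g)) /=.
under eq_bigr do rewrite permKV.
exact: tperm_displacement.
Qed.

End TailWeight.

Theorem lemma8 (R : realFieldType) (n : nat) (L G eta : R) (a b : 'I_n -> R)
  (hn : (1 <= n)%N) (hL : 0 < L) (hG : 0 < G) (heta : 0 < eta)
  (hetan : eta * n%:R * L <= 1 / 2)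
  (ha : forall i, 0 <= a i <= L)
  (hb : forall i, - G <= b i <= G)
  (hsum : \sum_(i < n) b i = 0) :
  `| Eperm (Xsigma eta a b) | <= 2 * eta * n%:R * G * L.
Proof.
pose c u := 1 - eta * a u.
have etaL : eta * L <= 1 / 2.
  apply: le_trans hetan; rewrite -mulrA ler_pM2l // -[X in X <= _]mul1r.
  by apply: ler_wpM2r; [exact: ltW | rewrite ler1n].
have eta_a u : 0 <= eta * a u <= eta * L.
  have /andP[a0 aL] := ha u.
  by rewrite ler_pM2l // aL andbT mulr_ge0 // ltW.
have c_unit u : 0 <= c u <= 1 by have := eta_a u; rewrite /c; lra.
have c_close u w : `|c u - c w| <= eta * L.
  by have := eta_a u; have := eta_a w; rewrite /c ler_norml; lra.
pose W := tail_weight c; pose v0 : 'I_n := Ordinal hn.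
have centered : \sum_v b v * W v = \sum_v b v * (W v - W v0).
  under [RHS]eq_bigr do rewrite mulrBr.
  by rewrite sumrB -mulr_suml hsum mul0r subr0.
set N := #|{perm 'I_n}|%:R : R.
have Npos : 0 < N by rewrite ltr0n; apply/card_gt0P; exists 1%g.
rewrite /Eperm (sum_tail_products c b) centered normrM normfV (gtr0_norm Npos).
rewrite ler_pdivrMr //; apply: (le_trans (ler_norm_sum _ _ _)).
apply: (@le_trans _ _ (\sum_(v < n) G * (N * (2 * (eta * L))))).
  apply: ler_sum => v _; rewrite normrM; apply: ler_pM => //.
    by have /andP[? ?] := hb v; rewrite ler_norml; apply/andP.
  exact: tail_weight_close.
rewrite sumr_const card_ord -mulr_natr le_eqVlt; apply/orP; left; apply/eqP; ring.
Qed.
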